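(* Let $(A,*,\circ)$ be a left skew brace and $I,J$ ideals of $A$. Then the Huq commutator $[I,J]$ is the ideal of $A$ generated by the union of the following three sets: (1) $\{\,i\circ j\circ(j\circ i)^{-\circ}\mid i\in I,\ j\in J\,\}$; (2) $\{\,i*j*(j*i)^{-*}\mid i\in I,\ j\in J\,\}$; (3) $\{\,(i\circ j)*(i*j)^{-*}\mid i\in I,\ j\in J\,\}$.
   Context: A (left) skew brace is a triple $(A,*,\circ)$ with $(A,* )$ and $(A,\circ)$ groups such that $a\circ(b*c)=(a\circ b)*a^{-*}*(a\circ c)$ for all $a,b,c\in A$; $a^{-*}$, $a^{-\circ}$ denote inverses in $(A,* )$, $(A,\circ)$; the groups share the identity. Morphisms are maps that are homomorphisms for both operations; products are componentwise. For $a,u\in A$, $\lambda_a(u)=a^{-*}*(a\circ u)$. An ideal of $A$ is a subset $I$ that is a normal subgroup of $(A,\circ)$, satisfies $I*a=a*I$ for all $a\in A$, and $\lambda_a(I)\subseteq I$ for all $a\in A$; ideals are sub-skew braces and for an ideal $K$ the cosets $a*K=a\circ K$ form the quotient skew brace $A/K$. The Huq commutator $[I,J]$ of ideals $I,J$ is the smallest ideal $K$ of $A$ such that the map $I\times J\to A/K$, $(i,j)\mapsto (i*j)*K$, is a skew brace morphism (equivalently, the kernel of the universal surjective morphism $\psi\colon A\to Q$ such that there is a skew brace morphism $\varphi\colon \psi(I)\times\psi(J)\to Q$ with $\varphi(x,1)=x$, $\varphi(1,y)=y$). *)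

Set Implicit Arguments.

Record skew_brace := SkewBrace {
  sb_car :> Type;
  sb_add : sb_car -> sb_car -> sb_car;      (* the operation * *)
  sb_mul : sb_car -> sb_car -> sb_car;      (* the operation o *)
  sb_one : sb_car;
  sb_addinv : sb_car -> sb_car;
  sb_mulinv : sb_car -> sb_car;
  sb_addA : forall a b c, sb_add a (sb_add b c) = sb_add (sb_add a b) c;
  sb_add1l : forall a, sb_add sb_one a = a;
  sb_add1r : forall a, sb_add a sb_one = a;
  sb_addVl : forall a, sb_add (sb_addinv a) a = sb_one;
  sb_addVr : forall a, sb_add a (sb_addinv a) = sb_one;
  sb_mulA : forall a b c, sb_mul a (sb_mul b c) = sb_mul (sb_mul a b) c;
  sb_mul1l : forall a, sb_mul sb_one a = a;
  sb_mul1r : forall a, sb_mul a sb_one = a;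
  sb_mulVl : forall a, sb_mul (sb_mulinv a) a = sb_one;
  sb_mulVr : forall a, sb_mul a (sb_mulinv a) = sb_one;
  sb_brace : forall a b c,
    sb_mul a (sb_add b c) = sb_add (sb_add (sb_mul a b) (sb_addinv a)) (sb_mul a c)
}.

Section SkewBraceDefs.
Variable A : skew_brace.

Local Notation "a * b" := (@sb_add A a b).
Local Notation "a 'o' b" := (@sb_mul A a b) (at level 40, left associativity).

Definition sb_lambda (a u : A) : A := @sb_addinv A a * (a o u).

Definition is_ideal (I : A -> Prop) : Prop :=
  I (sb_one A) /\
  (forall x y, I x -> I y -> I (x o y)) /\
  (forall x, I x -> I (@sb_mulinv A x)) /\
  (forall a x, I x -> I (a o x o @sb_mulinv A a)) /\
  (forall a, (forall i, I i -> exists i', I i' /\ i * a = a * i') /\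
             (forall i, I i -> exists i', I i' /\ a * i = i' * a)) /\
  (forall a u, I u -> I (sb_lambda a u)).

(* Equality of cosets a*K = b*K in the quotient A/K. *)
Definition coset_eq (K : A -> Prop) (a b : A) : Prop := K (@sb_addinv A a * b).

(* The map I x J -> A/K, (i,j) |-> (i*j)*K, is a skew brace morphism
   (operations on I x J componentwise; on A/K induced by representatives:
   (a*K)*(b*K) = (a*b)*K and (a*K) o (b*K) = (a o b)*K). *)
Definition huq_morph (I J K : A -> Prop) : Prop :=
  forall i i' j j', I i -> I i' -> J j -> J j' ->
    coset_eq K ((i * i') * (j * j')) ((i * j) * (i' * j')) /\
    coset_eq K ((i o i') * (j o j')) ((i * j) o (i' * j')).

Definition is_huq_commutator (I J K : A -> Prop) : Prop :=
  is_ideal K /\ huq_morph I J K /\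
  (forall K', is_ideal K' -> huq_morph I J K' -> forall x, K x -> K' x).

Definition ideal_gen (S : A -> Prop) : A -> Prop :=
  fun x => forall K, is_ideal K -> (forall s, S s -> K s) -> K x.

Definition huq_generators (I J : A -> Prop) : A -> Prop :=
  fun x => exists i j, I i /\ J j /\
    (x = (i o j) o @sb_mulinv A (j o i) \/
     x = (i * j) * @sb_addinv A (j * i) \/
     x = (i o j) * @sb_addinv A (i * j)).

End SkewBraceDefs.

Arguments sb_lambda {A} a u.
Arguments is_ideal {A} I.
Arguments coset_eq {A} K a b.
Arguments huq_morph {A} I J K.
Arguments is_huq_commutator {A} I J K.
Arguments ideal_gen {A} S x.
Arguments huq_generators {A} I J x.

(* Write a ~ b for a*K = b*K.  For an ideal K, ~ is a congruence for both operations, and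
   the three kinds of generators lie in K exactly when j*i ~ i*j, j o i ~ i o j
   and i*j ~ i o j for all i in I, j in J.  These relations say that (i,j) |-> i*j is a
   morphism I x J -> A/K: evaluating the morphism conditions at (i,1,1,j) and (1,i,j,1)
   gives them, and conversely
     (i o i') * (j o j') ~ i o i' o j o j' ~ i o j o i' o j' ~ (i * j) o (i' * j').
   Hence the ideals K for which the map is a morphism are exactly those containing the
   generators, and the least of them is the ideal they generate. *)
From Stdlib Require Import Setoid.

Section SkewBraceTheory.
Variable A : skew_brace.

Local Notation "a * b" := (sb_add A a b).
Local Notation "a 'o' b" := (sb_mul A a b) (at level 40, left associativity).
Local Notation "- a" := (sb_addinv A a).
Local Notation "a ^-1" := (sb_mulinv A a).
Local Notation one := (sb_one A).

Lemma addKl (a b : A) : - a * (a * b) = b.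
Proof. rewrite sb_addA, sb_addVl, sb_add1l; reflexivity. Qed.

Lemma addNKl (a b : A) : a * (- a * b) = b.
Proof. rewrite sb_addA, sb_addVr, sb_add1l; reflexivity. Qed.

Lemma addKr (a b : A) : b * a * - a = b.
Proof. rewrite <- sb_addA, sb_addVr, sb_add1r; reflexivity. Qed.

Lemma addNKr (a b : A) : b * - a * a = b.
Proof. rewrite <- sb_addA, sb_addVl, sb_add1r; reflexivity. Qed.

Lemma addI (a b c : A) : a * b = a * c -> b = c.
Proof. intro E. rewrite <- (addKl a b), E, addKl; reflexivity. Qed.

Lemma addNU (a b : A) : a * b = one -> - a = b.
Proof. intro E. rewrite <- (sb_add1r A (- a)), <- E, addKl; reflexivity. Qed.

Lemma addNN (a : A) : - - a = a.
Proof. apply addNU, sb_addVl. Qed.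

Lemma addN1 : - one = one.
Proof. apply addNU, sb_add1l. Qed.

Lemma addND (a b : A) : - (a * b) = - b * - a.
Proof. apply addNU. rewrite !sb_addA, addKr, sb_addVr; reflexivity. Qed.

Lemma mulKl (a b : A) : a^-1 o (a o b) = b.
Proof. rewrite sb_mulA, sb_mulVl, sb_mul1l; reflexivity. Qed.

Lemma mulKr (a b : A) : b o a o a^-1 = b.
Proof. rewrite <- sb_mulA, sb_mulVr, sb_mul1r; reflexivity. Qed.

Lemma mulVKr (a b : A) : b o a^-1 o a = b.
Proof. rewrite <- sb_mulA, sb_mulVl, sb_mul1r; reflexivity. Qed.

Lemma mulVU (a b : A) : a o b = one -> a^-1 = b.
Proof. intro E. rewrite <- (sb_mul1r A (a^-1)), <- E, mulKl; reflexivity. Qed.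

Lemma mulVV (a : A) : (a^-1)^-1 = a.
Proof. apply mulVU, sb_mulVl. Qed.

Lemma mulVM (a b : A) : (a o b)^-1 = b^-1 o a^-1.
Proof. apply mulVU. rewrite !sb_mulA, mulKr, sb_mulVr; reflexivity. Qed.

Lemma mul_lambda (a u : A) : a o u = a * sb_lambda a u.
Proof. unfold sb_lambda. rewrite addNKl; reflexivity. Qed.

Lemma lambda_comp (a b c : A) :
  sb_lambda a (sb_lambda b c) = sb_lambda (a o b) c.
Proof.
  apply (addI (a o b)). transitivity (a o (b o c)).
  - rewrite (mul_lambda b c), sb_brace, (mul_lambda a (sb_lambda b c)),
      <- sb_addA, addKl; reflexivity.
  - rewrite sb_mulA, (mul_lambda (a o b) c); reflexivity.
Qed.

Lemma lambda1 (c : A) : sb_lambda one c = c.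
Proof. unfold sb_lambda. rewrite addN1, sb_add1l, sb_mul1l; reflexivity. Qed.

Lemma lambdaK (a c : A) : sb_lambda (a^-1) (sb_lambda a c) = c.
Proof. rewrite lambda_comp, sb_mulVl, lambda1; reflexivity. Qed.

Lemma lambdaVK (a c : A) : sb_lambda a (sb_lambda (a^-1) c) = c.
Proof. rewrite lambda_comp, sb_mulVr, lambda1; reflexivity. Qed.

Lemma lambda_mulV (a : A) : sb_lambda a (a^-1) = - a.
Proof. unfold sb_lambda. rewrite sb_mulVr, sb_add1r; reflexivity. Qed.

Lemma add_lambda (a b : A) : a * b = a o sb_lambda (a^-1) b.
Proof. rewrite mul_lambda, lambdaVK; reflexivity. Qed.

Lemma addN_lambda (a b : A) : - a * b = sb_lambda a (a^-1 o b).
Proof. unfold sb_lambda. rewrite sb_mulA, sb_mulVr, sb_mul1l; reflexivity. Qed.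

Section Ideal.
Variable K : A -> Prop.
Hypothesis K_ideal : is_ideal K.

Lemma ideal1 : K one.
Proof. apply K_ideal. Qed.

Lemma ideal_mul x y : K x -> K y -> K (x o y).
Proof. apply K_ideal. Qed.

Lemma ideal_mulV x : K x -> K (x^-1).
Proof. apply K_ideal. Qed.

Lemma ideal_mulJ a x : K x -> K (a o x o a^-1).
Proof. apply K_ideal. Qed.

Lemma ideal_lambda a x : K x -> K (sb_lambda a x).
Proof. apply K_ideal. Qed.

Lemma ideal_add x y : K x -> K y -> K (x * y).
Proof.
  intros Kx Ky. rewrite add_lambda.
  apply ideal_mul; [exact Kx | apply ideal_lambda; exact Ky].
Qed.

Lemma ideal_addN x : K x -> K (- x).
Proof. intro Kx. rewrite <- lambda_mulV. apply ideal_lambda, ideal_mulV, Kx. Qed.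

Lemma ideal_addJ a x : K x -> K (- a * (x * a)).
Proof.
  intro Kx. destruct K_ideal as [_ [_ [_ [_ [normal _]]]]].
  destruct (proj1 (normal a) x Kx) as [x' [Kx' E]].
  rewrite E, addKl. exact Kx'.
Qed.

Lemma ideal_addJr a x : K x -> K (a * x * - a).
Proof.
  intro Kx. destruct K_ideal as [_ [_ [_ [_ [normal _]]]]].
  destruct (proj2 (normal a) x Kx) as [x' [Kx' E]].
  rewrite E, addKr. exact Kx'.
Qed.

Local Notation "x ~ y" := (coset_eq K x y) (at level 70).

Lemma coset_eq_mulP x y : x ~ y <-> K (x^-1 o y).
Proof.
  unfold coset_eq. rewrite addN_lambda. split; intro Kxy.
  - rewrite <- (lambdaK x (x^-1 o y)). apply ideal_lambda, Kxy.
  - apply ideal_lambda, Kxy.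
Qed.

Lemma coset_eq_refl x : x ~ x.
Proof. unfold coset_eq. rewrite sb_addVl. exact ideal1. Qed.

Lemma coset_eq_sym x y : x ~ y -> y ~ x.
Proof.
  unfold coset_eq. intro Kxy. apply ideal_addN in Kxy.
  rewrite addND, addNN in Kxy. exact Kxy.
Qed.

Lemma coset_eq_trans x y z : x ~ y -> y ~ z -> x ~ z.
Proof.
  unfold coset_eq. intros Kxy Kyz.
  pose proof (ideal_add _ _ Kxy Kyz) as Kxz.
  rewrite <- sb_addA, addNKl in Kxz. exact Kxz.
Qed.

Lemma coset_eq_add x x' y y' : x ~ x' -> y ~ y' -> x * y ~ x' * y'.
Proof.
  unfold coset_eq. intros Kx Ky.
  pose proof (ideal_add _ _ (ideal_addJ y _ Kx) Ky) as Kxy.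
  rewrite !sb_addA, addKr in Kxy. rewrite addND, !sb_addA. exact Kxy.
Qed.

Lemma coset_eq_mul x x' y y' : x ~ x' -> y ~ y' -> x o y ~ x' o y'.
Proof.
  rewrite !coset_eq_mulP. intros Kx Ky.
  pose proof (ideal_mul _ _ (ideal_mulJ (y^-1) _ Kx) Ky) as Kxy.
  rewrite mulVV, !sb_mulA, mulKr in Kxy. rewrite mulVM, !sb_mulA. exact Kxy.
Qed.

Lemma coset_eq_addr x y : y ~ x <-> K (x * - y).
Proof.
  unfold coset_eq. split; intro Kxy.
  - pose proof (ideal_addJr y _ Kxy) as Kc. rewrite addNKl in Kc. exact Kc.
  - pose proof (ideal_addJ y _ Kxy) as Kc. rewrite addNKr in Kc. exact Kc.
Qed.

Lemma coset_eq_mulr x y : y ~ x <-> K (x o y^-1).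
Proof.
  rewrite coset_eq_mulP. split; intro Kxy.
  - pose proof (ideal_mulJ y _ Kxy) as Kc.
    rewrite sb_mulA, sb_mulVr, sb_mul1l in Kc. exact Kc.
  - pose proof (ideal_mulJ (y^-1) _ Kxy) as Kc.
    rewrite mulVV, <- sb_mulA, mulVKr in Kc. exact Kc.
Qed.

End Ideal.

Lemma ideal_gen_ideal (S : A -> Prop) : is_ideal (ideal_gen S).
Proof.
  split; [|split; [|split; [|split; [|split]]]].
  - intros K K_ideal _. exact (ideal1 K K_ideal).
  - intros x y Sx Sy K K_ideal KS.
    exact (ideal_mul K K_ideal _ _ (Sx K K_ideal KS) (Sy K K_ideal KS)).
  - intros x Sx K K_ideal KS. exact (ideal_mulV K K_ideal _ (Sx K K_ideal KS)).
  - intros a x Sx K K_ideal KS. exact (ideal_mulJ K K_ideal a _ (Sx K K_ideal KS)).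
  - intros a. split.
    + intros x Sx. exists (- a * (x * a)). split.
      * intros K K_ideal KS. exact (ideal_addJ K K_ideal a _ (Sx K K_ideal KS)).
      * rewrite addNKl; reflexivity.
    + intros x Sx. exists (a * x * - a). split.
      * intros K K_ideal KS. exact (ideal_addJr K K_ideal a _ (Sx K K_ideal KS)).
      * rewrite addNKr; reflexivity.
  - intros a x Sx K K_ideal KS. exact (ideal_lambda K K_ideal a _ (Sx K K_ideal KS)).
Qed.

Lemma ideal_gen_sub (S : A -> Prop) x : S x -> ideal_gen S x.
Proof. intros Sx K _ KS. apply KS, Sx. Qed.

Section HuqMorphism.
Variables I J K : A -> Prop.
Hypotheses (I_ideal : is_ideal I) (J_ideal : is_ideal J) (K_ideal : is_ideal K).

Local Notation "x ~ y" := (coset_eq K x y) (at level 70).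

Definition huq_relations : Prop :=
  forall i j, I i -> J j -> j * i ~ i * j /\ j o i ~ i o j /\ i * j ~ i o j.

Lemma huq_generators_subP :
  (forall x, huq_generators I J x -> K x) <-> huq_relations.
Proof.
  split.
  - intros KS i j Ii Jj.
    assert (gen : forall x, (x = (i o j) o (j o i)^-1 \/ x = (i * j) * - (j * i) \/
                             x = (i o j) * - (i * j)) -> K x)
      by (intros x Hx; apply KS; exists i, j; auto).
    split; [|split].
    + apply coset_eq_addr; auto.
    + apply coset_eq_mulr; auto.
    + apply coset_eq_addr; auto.
  - intros rel x [i [j [Ii [Jj Hx]]]].
    destruct (rel i j Ii Jj) as [add_comm [mul_comm add_mul]].
    destruct Hx as [-> | [-> | ->]].
    + apply coset_eq_mulr; auto.
    + apply coset_eq_addr; auto.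
    + apply coset_eq_addr; auto.
Qed.

Lemma huq_morphP : huq_morph I J K <-> huq_relations.
Proof.
  split.
  - intros morph i j Ii Jj.
    destruct (morph i one one j Ii (ideal1 _ I_ideal) (ideal1 _ J_ideal) Jj)
      as [_ add_mul].
    destruct (morph one i j one (ideal1 _ I_ideal) Ii Jj (ideal1 _ J_ideal))
      as [add_comm add_mulC].
    rewrite sb_mul1r, sb_mul1l, sb_add1r, sb_add1l in add_mul.
    rewrite sb_add1l, sb_add1r, sb_add1l, sb_add1r in add_comm.
    rewrite sb_mul1l, sb_mul1r, sb_add1l, sb_add1r in add_mulC.
    split; [|split].
    + exact (coset_eq_sym K K_ideal _ _ add_comm).
    + exact (coset_eq_trans K K_ideal _ _ _
               (coset_eq_sym K K_ideal _ _ add_mulC) add_mul).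
    + exact add_mul.
  - intros rel i i' j j' Ii Ii' Jj Jj'. split.
    + replace ((i * i') * (j * j')) with (i * ((i' * j) * j'))
        by (rewrite !sb_addA; reflexivity).
      replace ((i * j) * (i' * j')) with (i * ((j * i') * j'))
        by (rewrite !sb_addA; reflexivity).
      apply coset_eq_add, coset_eq_add; try apply coset_eq_refl; auto.
      apply coset_eq_sym, rel; auto.
    + destruct (rel i j Ii Jj) as [_ [_ add_mul_ij]].
      destruct (rel i' j Ii' Jj) as [_ [mul_comm _]].
      destruct (rel i' j' Ii' Jj') as [_ [_ add_mul_ij']].
      destruct (rel (i o i') (j o j')) as [_ [_ add_mul]].
      { exact (ideal_mul I I_ideal _ _ Ii Ii'). }
      { exact (ideal_mul J J_ideal _ _ Jj Jj'). }
      apply (coset_eq_trans K K_ideal _ _ _ add_mul).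
      apply (coset_eq_trans K K_ideal _ ((i o j) o (i' o j'))).
      * replace ((i o i') o (j o j')) with (i o ((i' o j) o j'))
          by (rewrite !sb_mulA; reflexivity).
        replace ((i o j) o (i' o j')) with (i o ((j o i') o j'))
          by (rewrite !sb_mulA; reflexivity).
        apply coset_eq_mul, coset_eq_mul; try apply coset_eq_refl; try exact K_ideal.
        exact (coset_eq_sym K K_ideal _ _ mul_comm).
      * apply coset_eq_mul; [exact K_ideal | |];
          apply coset_eq_sym; assumption.
Qed.

End HuqMorphism.

End SkewBraceTheory.

Theorem proposition2p5 (A : skew_brace) (I J : A -> Prop) :
  is_ideal I -> is_ideal J ->
  is_huq_commutator I J (ideal_gen (huq_generators I J)).
Proof.
  intros I_ideal J_ideal.
  pose proof (ideal_gen_ideal A (huq_generators I J)) as gen_ideal.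
  split; [exact gen_ideal | split].
  - apply huq_morphP, huq_generators_subP; auto.
    apply ideal_gen_sub.
  - intros K K_ideal morph x gen_x. apply gen_x; [exact K_ideal|].
    apply huq_generators_subP, huq_morphP; auto.
Qed.
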